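(* Let $K$ be a field of characteristic different from $2$. For a $K$-vector space $V$, let $w_K(V)$ be the set $V$ with constant $0$ and ternary operations $\bar p_1(x,y,z)=x+\frac{z-y}{2}$, $\bar p_2(x,y,z)=\frac{x+z}{2}$, $\bar p_3(x,y,z)=\frac{x-y}{2}+z$. Then $w_K(V)$ is an algebra of $\mathrm{Hex}_3$, the addition $+:V\times V\to V$ is a $\mathrm{Hex}_3$-homomorphism making $w_K(V)$ an internal abelian group in $\mathrm{Hex}_3$, and $V\mapsto w_K(V)$ (identity on underlying maps) defines a faithful functor $w_K:K\text{-}\mathrm{Vect}\to\mathrm{Ab}(\mathrm{Hex}_3)$. Moreover, for $V\neq 0$, the objects $w_K(V)$ and $h(V,+)$ of $\mathrm{Ab}(\mathrm{Hex}_3)$ are not isomorphic.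
   Context: $\mathrm{Hex}_3$ is the pointed variety with one constant $0$ and three ternary operations $p_1,p_2,p_3$ subject exactly to $p_1(a,0,0)=a$, $p_2(a,0,a)=a$, $p_3(0,0,a)=a$, $p_1(a,a,b)=p_2(a,a,b)$, $p_2(a,b,b)=p_3(a,b,b)$, $p_i(b,b,b)=b$ ($i=1,2,3$). $\mathrm{Ab}(\mathrm{Hex}_3)$ is the category of internal abelian groups in $\mathrm{Hex}_3$. For an abelian group $(G,+)$, $h(G)$ denotes the $\mathrm{Hex}_3$-algebra on $G$ with constant $0$, $p_1(x,y,z)=x-y+z$, $p_2(x,y,z)=p_3(x,y,z)=z$, with internal abelian group structure given by $+$. *)

From HB Require Import structures.
From mathcomp Require Import all_boot all_order all_algebra.
Set Implicit Arguments. Unset Strict Implicit. Unset Printing Implicit Defensive.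
Import GRing.Theory.
Local Open Scope ring_scope.

Record hex3_ops (T : Type) := Hex3Ops {
  hc0 : T;
  hp1 : T -> T -> T -> T;
  hp2 : T -> T -> T -> T;
  hp3 : T -> T -> T -> T }.

Definition hex3_axioms T (A : hex3_ops T) : Prop :=
  [/\ forall a, hp1 A a (hc0 A) (hc0 A) = a,
      forall a, hp2 A a (hc0 A) a = a,
      forall a, hp3 A (hc0 A) (hc0 A) a = a,
      forall a b, hp1 A a a b = hp2 A a a b &
      forall a b, hp2 A a b b = hp3 A a b b] /\
  forall b, [/\ hp1 A b b b = b, hp2 A b b b = b & hp3 A b b b = b].

Definition hex3_hom T U (A : hex3_ops T) (B : hex3_ops U) (f : T -> U) : Prop :=
  [/\ f (hc0 A) = hc0 B,
      forall x y z, f (hp1 A x y z) = hp1 B (f x) (f y) (f z),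
      forall x y z, f (hp2 A x y z) = hp2 B (f x) (f y) (f z) &
      forall x y z, f (hp3 A x y z) = hp3 B (f x) (f y) (f z)].

Definition hex3_prod T U (A : hex3_ops T) (B : hex3_ops U) : hex3_ops (T * U) :=
  Hex3Ops (hc0 A, hc0 B)
    (fun x y z => (hp1 A x.1 y.1 z.1, hp1 B x.2 y.2 z.2))
    (fun x y z => (hp2 A x.1 y.1 z.1, hp2 B x.2 y.2 z.2))
    (fun x y z => (hp3 A x.1 y.1 z.1, hp3 B x.2 y.2 z.2)).

Definition wK (K : fieldType) (V : lmodType K) : hex3_ops V :=
  Hex3Ops 0
    (fun x y z => x + (2%:R : K)^-1 *: (z - y))
    (fun x y z => (2%:R : K)^-1 *: (x + z))
    (fun x y z => (2%:R : K)^-1 *: (x - y) + z).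

Definition hG (G : zmodType) : hex3_ops G :=
  Hex3Ops 0 (fun x y z => x - y + z) (fun x y z => z) (fun x y z => z).

(* (A, +, -, 0) is an internal abelian group in Hex_3: the group operations
   are Hex_3-homomorphisms (the unit being the constant). The group laws
   themselves hold since G is a zmodType. *)
Definition internal_ab_group (G : zmodType) (A : hex3_ops G) : Prop :=
  [/\ hex3_axioms A,
      hc0 A = 0,
      hex3_hom (hex3_prod A A) A (fun p => p.1 + p.2) &
      hex3_hom A A (fun x => - x)].

Definition ab_hex3_hom (G H : zmodType) (A : hex3_ops G) (B : hex3_ops H)
  (f : G -> H) : Prop :=
  hex3_hom A B f /\ forall x y, f (x + y) = f x + f y.

Definition ab_hex3_iso (G H : zmodType) (A : hex3_ops G) (B : hex3_ops H) : Prop :=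
  exists (f : G -> H) (g : H -> G),
    [/\ cancel f g, cancel g f, ab_hex3_hom A B f & ab_hex3_hom B A g].

(* All Hex_3 operations of w_K(V) are affine combinations whose coefficients
   are 1, 1/2 and -1/2, so:
   - every K-linear map, and in particular addition V x V -> V and negation,
     commutes with them; this needs no hypothesis on K and gives both the
     internal abelian group structure and the functoriality of w_K;
   - the Hex_3 identities only use that 1/2 + 1/2 = 1, i.e. char K <> 2.
   For the non-isomorphism we show that every Hex_3-homomorphism
   f : w_K(V) -> h(W) is identically zero: v = p_2(v + v, 0, 0) in w_K(V)
   while p_2(x, y, z) = z in h(W), hence f v = f 0 = 0.  An isomorphism
   w_K(V) ~ h(V) would then be both zero and injective, forcing V = 0. *)

From HB Require Import structures.
From mathcomp Require Import all_boot all_order all_algebra.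
Import GRing.Theory.
Local Open Scope ring_scope.

Section LinearMapsAreHex3Homs.
Variables (K : fieldType) (V W : lmodType K).

Lemma linear_wK_hom (f : {linear V -> W}) : hex3_hom (wK V) (wK W) f.
Proof.
split => /= [|x y z|x y z|x y z]; first exact: linear0.
- by rewrite linearD linearZ linearB.
- by rewrite linearZ linearD.
- by rewrite linearD linearZ linearB.
Qed.

End LinearMapsAreHex3Homs.

Section WKGroupOperations.
Variables (K : fieldType) (V : lmodType K).

Lemma wK_add_hom :
  hex3_hom (hex3_prod (wK V) (wK V)) (wK V) (fun p => p.1 + p.2).
Proof.
split => /= [|x y z|x y z|x y z]; first by rewrite addr0.
- by rewrite [LHS]addrACA -scalerDr addrACA opprD.
- by rewrite -scalerDr addrACA.
- by rewrite [LHS]addrACA -scalerDr addrACA opprD.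
Qed.

Lemma wK_opp_hom : hex3_hom (wK V) (wK V) (fun x => - x).
Proof.
split => /= [|x y z|x y z|x y z]; first exact: oppr0.
- by rewrite opprD -scalerN opprD.
- by rewrite -scalerN opprD.
- by rewrite opprD -scalerN opprD.
Qed.

End WKGroupOperations.

Section Halving.
Variables (K : fieldType) (hK : (2%:R : K) != 0) (V : lmodType K).

Let half : K := (2%:R)^-1.

(* Halving is inverse to doubling: the only place where char K <> 2 is used. *)
Lemma half_double (a : V) : half *: (a + a) = a.
Proof. by rewrite -mulr2n -scaler_nat scalerA mulVf // scale1r. Qed.

Lemma half_add_half (a : V) : half *: a + half *: a = a.
Proof. by rewrite -scalerDr half_double. Qed.

Lemma wK_hex3_axioms : hex3_axioms (wK V).
Proof.
have p1_diag (a b : V) : a + half *: (b - a) = half *: (a + b).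
  by rewrite scalerBr scalerDr -{1}(half_add_half a) addrACA subrr addr0.
have p3_diag (a b : V) : half *: (a - b) + b = half *: (a + b).
  by rewrite scalerBr scalerDr -{2}(half_add_half b) addrACA addNr addr0.
split; first split => /= [a|a|a|a b|a b].
- by rewrite subrr scaler0 addr0.
- exact: half_double.
- by rewrite subrr scaler0 add0r.
- exact: p1_diag.
- by rewrite p3_diag.
- move=> b; split => /=; last by rewrite subrr scaler0 add0r.
  + by rewrite subrr scaler0 addr0.
  + exact: half_double.
Qed.

Lemma hom_wK_hG_zero (G : zmodType) (f : V -> G) :
  hex3_hom (wK V) (hG G) f -> forall v, f v = 0.
Proof.
move=> [f0 _ f_p2 _] v.
have v_p2 : v = hp2 (wK V) (v + v) 0 0 by rewrite /= addr0 half_double.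
by rewrite v_p2 f_p2 /= f0.
Qed.

End Halving.

Theorem mainTheorem18 (K : fieldType) (hK : (2%:R : K) != 0) :
  (* w_K(V) is an internal abelian group in Hex_3 *)
  (forall V : lmodType K, internal_ab_group (wK V)) /\
  (* functoriality: K-linear maps are morphisms of Ab(Hex_3) between the w_K's
     (the functor is the identity on underlying maps, hence faithful) *)
  (forall (V W : lmodType K) (f : {linear V -> W}),
      ab_hex3_hom (wK V) (wK W) f) /\
  (* for V <> 0, w_K(V) and h(V,+) are not isomorphic in Ab(Hex_3) *)
  (forall V : lmodType K, (exists v : V, v != 0) ->
      ~ ab_hex3_iso (wK V) (hG V)).
Proof.
split; last split.
- move=> V; split => //.
  + exact: wK_hex3_axioms.
  + exact: wK_add_hom.
  + exact: wK_opp_hom.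
- move=> V W f; split; first exact: linear_wK_hom.
  by move=> x y; rewrite linearD.
- move=> V [v v_neq0] [f [g [fK _ [f_hom _] _]]].
  have f_zero := @hom_wK_hG_zero K hK V V f f_hom.
  have : v = 0 by rewrite -(fK v) f_zero -(f_zero 0) fK.
  by move/eqP; rewrite (negbTE v_neq0).
Qed.
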